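(* The twisted arrow category $\mathrm{Tw}(sOp)$ of the operad $sOp$ of single-coloured operads, equivalently the Moerdijk--Weiss dendroidal category $\Omega$, is not quasi-Gr\''obner.
   Context: Here $sOp$ is the (set-)operad whose algebras are single-coloured (symmetric) operads, whose operations are operadic trees (rooted trees with half-edges, ordered leaves, ordered half-edges at each vertex, and ordered vertices). For an operad $P$, the twisted arrow category $\mathrm{Tw}(P)$ has the operations of $P$ as objects; a morphism from an operation $p$ of arity $n$ to an operation of arity $m$ is represented by a planar rooted tree of height 3 (height 2 if $n=0$) with $m$ input leaves indexed $1,\dots,m$, with exactly one middle vertex marked by $p$, a lower vertex marked by some $q_0$ connected to the middle vertex by its first input edge, and upper vertices marked by $q_1,\dots,q_n$ grafted on the inputs of $p$ (arities matching, leaf indices increasing in planar order above each vertex); the target is the evaluation of the tree, and composition is by grafting and evaluating the subtrees not containing the middle vertex. A category $\mathcal{D}$ is quasi-Gr\''obner if there is an essentially surjective functor $\Phi:\mathcal{C}\to\mathcal{D}$ satisfying property (F) (for every object $d$ there are finitely many $f_i:d\to\Phi(c_i)$ through which every $f:d\to\Phi(c)$ factors as $\Phi(g)\circ f_i$) with $\mathcal{C}$ Gr\''obner (admissible well-orders on morphisms out of each object, and the posets $|c/\mathcal{C}|$ Noetherian). For quasi-Gr\''obner categories and left-Noetherian rings $k$, the category of modules (functors to $k$-modules) is locally Noetherian. *)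

From HB Require Import structures.
From mathcomp Require Import all_boot.
From Stdlib Require Import ProofIrrelevance.

Set Implicit Arguments.
Unset Strict Implicit.
Unset Printing Implicit Defensive.

Record category := Category {
  Obj : Type;
  Hom : Obj -> Obj -> Type;
  idm : forall x, Hom x x;
  comp : forall x y z, Hom y z -> Hom x y -> Hom x z;
  comp_id_l : forall x y (f : Hom x y), comp (idm y) f = f;
  comp_id_r : forall x y (f : Hom x y), comp f (idm x) = f;
  comp_assoc : forall x y z w (h : Hom z w) (g : Hom y z) (f : Hom x y),
      comp h (comp g f) = comp (comp h g) f }.

Arguments Hom {c} x y.
Arguments idm {c} x.
Arguments comp {c x y z} g f.

Record functor (C D : category) := Functor {
  fobj : Obj C -> Obj D;
  fmap : forall x y, Hom x y -> Hom (fobj x) (fobj y);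
  fmap_id : forall x, fmap (idm x) = idm (fobj x);
  fmap_comp : forall x y z (g : Hom y z) (f : Hom x y),
      fmap (comp g f) = comp (fmap g) (fmap f) }.

Arguments fobj {C D} _ _.
Arguments fmap {C D} _ {x y} _.

Definition isomorphic (C : category) (x y : Obj C) : Prop :=
  exists (f : Hom x y) (g : Hom y x), comp g f = idm x /\ comp f g = idm y.

Definition ess_surj (C D : category) (F : functor C D) : Prop :=
  forall d : Obj D, exists c : Obj C, isomorphic (fobj F c) d.

Definition property_F (C D : category) (F : functor C D) : Prop :=
  forall d : Obj D, exists (n : nat) (cs : 'I_n -> Obj C)
    (fs : forall i : 'I_n, Hom d (fobj F (cs i))),
    forall (c : Obj C) (f : Hom d (fobj F c)),
      exists (i : 'I_n) (g : Hom (cs i) c), f = comp (fmap F g) (fs i).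

Definition strict_well_order (T : Type) (lt : T -> T -> Prop) : Prop :=
  [/\ (forall a, ~ lt a a),
      (forall a b c, lt a b -> lt b c -> lt a c),
      (forall a b, a = b \/ lt a b \/ lt b a)
    & well_founded lt].

Definition admissible_order (C : category) (x : Obj C)
    (lt : forall y : Obj C, Hom x y -> Hom x y -> Prop) : Prop :=
  (forall y, strict_well_order (lt y)) /\
  (forall y z (g : Hom y z) (f f' : Hom x y),
      lt y f f' -> lt z (comp g f) (comp g f')).

Definition noetherian (T : Type) (le : T -> T -> Prop) : Prop :=
  forall s : nat -> T, exists i j : nat, (i < j)%N /\ le (s i) (s j).

(* The poset |x/C|: morphisms out of x, f <= f' iff f' = g o f;
   (we keep the preorder, whose quotient by isomorphism is |x/C|;
   the Noetherian condition is insensitive to this quotient). *)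
Definition under_le (C : category) (x : Obj C)
    (a b : {y : Obj C & Hom x y}) : Prop :=
  exists g : Hom (projT1 a) (projT1 b), comp g (projT2 a) = projT2 b.

Definition grobner (C : category) : Prop :=
  forall x : Obj C,
    (exists lt, @admissible_order C x lt) /\ noetherian (@under_le C x).

Definition quasi_grobner (D : category) : Prop :=
  exists (C : category) (F : functor C D),
    [/\ grobner C, ess_surj F & property_F F].

(* A finite (non-planar) rooted tree, given by its edges 'I_tsize, its
   root edge, the parent map (an edge that is an input of a vertex is
   sent to the output edge of that vertex) and the set of inner edges,
   i.e. edges that are outputs of a vertex (vertices are identified with
   their output edges; an inner edge without inputs is a stump). *)
Record tree := Tree {
  tsize : nat;
  troot : 'I_tsize;
  tpar : 'I_tsize -> option 'I_tsize;
  tinner : {set 'I_tsize};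
  tpar_root : forall e, tpar e = None <-> e = troot;
  tpar_inner : forall e p, tpar e = Some p -> p \in tinner;
  tpar_wf : forall e, exists k, iter k (fun x => odflt x (tpar x)) e = troot }.

Definition edge (T : tree) := 'I_(tsize T).

(* Operations of the free coloured operad Omega(T): there is (exactly) one
   operation with output colour e and (unordered, distinct) input colours L
   iff tree_op L e, i.e. L and e bound a subtree of T. *)
Inductive tree_op (T : tree) : {set edge T} -> edge T -> Prop :=
| top_id (e : edge T) : tree_op [set e] e
| top_vertex (v : edge T) (Ls : edge T -> {set edge T}) :
    v \in tinner T ->
    (forall x : edge T, tpar x = Some v -> tree_op (Ls x) x) ->
    tree_op (\bigcup_(x | tpar x == Some v) Ls x) v.

(* Operad maps Omega(S) -> Omega(T): maps on colours sending every operation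
   (L; e) of Omega(S) to an operation of Omega(T) with profile (f L; f e)
   (in particular the colours f(l), l in L, must be pairwise distinct).
   Since all hom-sets of Omega(T) are subsingletons, this is exactly an
   operad morphism. *)
Definition omega_map (S T : tree) (f : edge S -> edge T) : Prop :=
  forall (L : {set edge S}) (e : edge S),
    tree_op L e -> {in L &, injective f} /\ tree_op (f @: L) (f e).

Definition omega_hom (S T : tree) := {f : edge S -> edge T | omega_map f}.

Lemma omega_map_id (S : tree) : omega_map (fun x : edge S => x).
Proof.
move=> L e H; split; first by move=> x y _ _.
by rewrite imset_id.
Qed.

Lemma omega_map_comp (S T U : tree) (g : edge T -> edge U) (f : edge S -> edge T) :
  omega_map g -> omega_map f -> omega_map (fun x => g (f x)).
Proof.
move=> hg hf L e H.
have [injf Hf] := hf L e H.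
have [injg Hg] := hg _ _ Hf.
split.
  move=> x y xL yL /injg E.
  by apply: injf => //; apply: E; apply: imset_f.
have -> : [set g (f x) | x in L] = g @: (f @: L).
  by rewrite -imset_comp.
exact: Hg.
Qed.

Definition omega_id (S : tree) : omega_hom S S :=
  exist _ (fun x => x) (@omega_map_id S).

Definition omega_comp (S T U : tree) (g : omega_hom T U) (f : omega_hom S T) :
  omega_hom S U :=
  exist _ (fun x => proj1_sig g (proj1_sig f x))
    (omega_map_comp (proj2_sig g) (proj2_sig f)).

Lemma omega_comp_id_l (S T : tree) (f : omega_hom S T) :
  omega_comp (omega_id T) f = f.
Proof. by case: f => f hf; apply: subset_eq_compat. Qed.

Lemma omega_comp_id_r (S T : tree) (f : omega_hom S T) :
  omega_comp f (omega_id S) = f.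
Proof. by case: f => f hf; apply: subset_eq_compat. Qed.

Lemma omega_comp_assoc (S T U V : tree) (h : omega_hom U V) (g : omega_hom T U)
  (f : omega_hom S T) :
  omega_comp h (omega_comp g f) = omega_comp (omega_comp h g) f.
Proof. by apply: subset_eq_compat. Qed.

Definition Omega : category :=
  @Category tree omega_hom omega_id omega_comp
    omega_comp_id_l omega_comp_id_r omega_comp_assoc.

From Pilot Require Import Defs.
From mathcomp Require Import all_boot.
From Stdlib Require Import ClassicalEpsilon.

Set Implicit Arguments.
Unset Strict Implicit.
Unset Printing Implicit Defensive.

(* By essential surjectivity and property (F), every f : d -> y becomes, after
   composition with an isomorphism y ~ F c, of the form F(g) o f_i for one of
   finitely many f_i.  Along any sequence some f_i occurs infinitely often, so
   the Noetherianity of |c_i/C| transports to |d/D|.  In Omega this fails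
   under the unit tree: the root inclusions of the corollas with at least two
   leaves form an infinite antichain, since a morphism of corollas fixing the
   root sends the vertex operation injectively onto an operation with root
   output, which can only be the vertex operation of the target. *)

Lemma infinitely_often_pigeonhole n (P : 'I_n -> nat -> Prop) :
  (forall k, exists i, P i k) ->
  exists i, forall m, exists k, m <= k /\ P i k.
Proof.
move=> cover; apply: NNPP => /not_ex_all_not finite.
have /choice[bound Hbound] : forall i, exists m, forall k, m <= k -> ~ P i k.
  move=> i; apply: NNPP => /not_ex_all_not unbounded; apply: (finite i) => m.
  apply: NNPP => none; apply: (unbounded m) => k mk Pk.
  by apply: none; exists k.
have [i Pi] := cover (\max_(i < n) bound i).
exact: Hbound i _ (leq_bigmax i) Pi.
Qed.

Lemma increasing_subseq (P : nat -> Prop) :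
  (forall m, exists k, m <= k /\ P k) ->
  exists phi : nat -> nat, {homo phi : a b / a < b} /\ forall k, P (phi k).
Proof.
move=> /choice[next Hnext].
pose step m := (next m).+1.
exists (fun k => next (iter k step 0)); split; last by move=> k; case: (Hnext (iter k step 0)).
apply: homo_ltn => [x y z|k]; first exact: ltn_trans.
by case: (Hnext (iter k.+1 step 0)).
Qed.

Lemma pigeonhole_subseq n (P : 'I_n -> nat -> Prop) :
  (forall k, exists i, P i k) ->
  exists i (phi : nat -> nat), {homo phi : a b / a < b} /\ forall k, P i (phi k).
Proof.
move=> /infinitely_often_pigeonhole[i /increasing_subseq[phi Hphi]].
by exists i, phi.
Qed.

Lemma under_le_fmap (C D : category) (F : functor C D) (d : Obj D) x
    (f : Hom d (fobj F x)) y z (g : Hom x y) (g' : Hom x z) :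
  under_le (existT _ y g) (existT _ z g') ->
  under_le (existT _ (fobj F y) (Defs.comp (fmap F g) f))
           (existT _ (fobj F z) (Defs.comp (fmap F g') f)).
Proof.
move=> [/= h <-]; exists (fmap F h) => /=.
by rewrite fmap_comp comp_assoc.
Qed.

Lemma under_le_retract (D : category) (d : Obj D) (a b : {y : Obj D & Hom d y})
    z z' (v : Hom (projT1 a) z) (v' : Hom (projT1 b) z') (u' : Hom z' (projT1 b)) :
  Defs.comp u' v' = idm (projT1 b) ->
  under_le (existT _ z (Defs.comp v (projT2 a)))
           (existT _ z' (Defs.comp v' (projT2 b))) ->
  under_le a b.
Proof.
move=> u'v' [/= h Hh]; exists (Defs.comp u' (Defs.comp h v)).
by rewrite -!comp_assoc Hh comp_assoc u'v' comp_id_l.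
Qed.

Lemma property_F_retract (C D : category) (F : functor C D) :
  ess_surj F -> property_F F ->
  forall d : Obj D, exists n (cs : 'I_n -> Obj C)
    (fs : forall i, Hom d (fobj F (cs i))),
  forall y (f : Hom d y), exists i (x : {c : Obj C & Hom (cs i) c})
    (u : Hom (fobj F (projT1 x)) y) (v : Hom y (fobj F (projT1 x))),
    Defs.comp u v = idm y /\ Defs.comp v f = Defs.comp (fmap F (projT2 x)) (fs i).
Proof.
move=> esF propF d; have [n [cs [fs factor]]] := propF d.
exists n, cs, fs => y f.
have [c [u [v [_ uv]]]] := esF y.
have [i [g Hg]] := factor c (Defs.comp v f).
by exists i, (existT _ c g), u, v.
Qed.

Lemma quasi_grobner_under_noetherian (D : category) :
  quasi_grobner D -> forall d : Obj D, noetherian (@under_le D d).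
Proof.
move=> [C [F [grobC esF propF]]] d s.
have [n [cs [fs factor]]] := property_F_retract esF propF d.
have [i [phi [phi_incr /choice[x Hx]]]] := pigeonhole_subseq
  (P := fun i k => exists (x : {c : Obj C & Hom (cs i) c}) u v,
    Defs.comp u v = idm (projT1 (s k)) /\
    Defs.comp v (projT2 (s k)) = Defs.comp (fmap F (projT2 x)) (fs i))
  (fun k => factor _ (projT2 (s k))).
have [a [b [ab le_ab]]] := (grobC (cs i)).2 x.
exists (phi a), (phi b); split; first exact: phi_incr.
have [_ [va [_ Ha]]] := Hx a; have [ub [vb [Hu Hb]]] := Hx b.
apply: (under_le_retract (v := va)) Hu _; rewrite Ha Hb.
exact: under_le_fmap le_ab.
Qed.

Definition eta_tree : tree.
Proof.
refine (@Tree 1 ord0 (fun _ => None) set0 _ _ _).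
- by move=> e; rewrite (ord1 e).
- by [].
- by move=> e; exists 0; rewrite (ord1 e).
Defined.

Definition corolla_par n (e : 'I_n.+1) : option 'I_n.+1 :=
  if e == ord0 then None else Some ord0.

Definition corolla (n : nat) : tree.
Proof.
refine (@Tree n.+1 ord0 (@corolla_par n) [set ord0] _ _ _).
- by move=> e; rewrite /corolla_par; case: eqP.
- by move=> e p; rewrite /corolla_par; case: eqP => // _ [<-]; rewrite inE.
- by move=> e; exists 1; rewrite /= /corolla_par; case: eqP.
Defined.

Lemma omega_map_const (T : tree) (x : edge T) :
  omega_map (fun _ : edge eta_tree => x).
Proof.
move=> L e; case=> [e'|v Ls]; last by rewrite inE.
split; first by move=> a b _ _; rewrite (ord1 a) (ord1 b).
by rewrite imset_set1; apply: top_id.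
Qed.

Definition corolla_root n : omega_hom eta_tree (corolla n) :=
  exist _ (fun _ => ord0) (omega_map_const (T := corolla n) ord0).

Lemma corolla_parP n (x : edge (corolla n)) : (tpar x == Some ord0) = (x != ord0).
Proof. by rewrite /= /corolla_par; case: (x =P ord0). Qed.

Lemma bigcup_corolla_leaves n (Ls : edge (corolla n) -> {set edge (corolla n)}) :
  (forall x, x != ord0 -> Ls x = [set x]) ->
  \bigcup_(x | tpar x == Some (ord0 : edge (corolla n))) Ls x = [set~ ord0].
Proof.
move=> leaves; apply/setP=> y; rewrite !inE; apply/bigcupP/idP.
- by move=> [x]; rewrite corolla_parP => x0; rewrite leaves // inE => /eqP ->.
- by move=> y0; exists y; rewrite ?corolla_parP ?leaves ?inE.
Qed.

Lemma corolla_op_leaf n (L : {set edge (corolla n)}) x :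
  tree_op L x -> x != ord0 -> L = [set x].
Proof. by case=> // v Ls; rewrite inE => /eqP ->; rewrite eqxx. Qed.

Lemma corolla_opP n (L : {set edge (corolla n)}) e :
  tree_op L e -> L = [set e] \/ e = ord0 /\ L = [set~ ord0].
Proof.
case=> [|v Ls]; first by left.
rewrite inE => /eqP -> children; right; split=> //.
apply: bigcup_corolla_leaves => x x0; apply: (corolla_op_leaf _ x0).
by apply: children; apply/eqP; rewrite corolla_parP.
Qed.

Lemma corolla_op_vertex n : tree_op [set~ (ord0 : edge (corolla n))] ord0.
Proof.
rewrite -(@bigcup_corolla_leaves n (fun x => [set x])) //.
by apply: top_vertex => [|x _]; [rewrite inE | exact: top_id].
Qed.

(* For m = 1 the vertex may collapse onto the identity operation of the root. *)
Lemma corolla_hom_root_arity m n (g : omega_hom (corolla m) (corolla n)) :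
  1 < m -> proj1_sig g ord0 = ord0 -> m = n.
Proof.
case: g => g /= gmap m_gt1 g0.
have [g_inj] := gmap _ _ (corolla_op_vertex m); rewrite g0.
have card_img : #|g @: [set~ ord0]| = m.
  by rewrite (card_in_imset g_inj) cardsC1 card_ord.
case/corolla_opP => [|[_]] img; rewrite img in card_img.
  by rewrite cards1 in card_img; rewrite -card_img in m_gt1.
by rewrite cardsC1 card_ord in card_img.
Qed.

Lemma Omega_under_eta_not_noetherian : ~ noetherian (@under_le Omega eta_tree).
Proof.
move=> /(_ (fun k => existT _ (corolla k.+2) (corolla_root k.+2))) [i [j [ij [g Hg]]]].
move: g Hg => /= g Hg.
have g0 : proj1_sig g ord0 = ord0.
  by move/(f_equal (fun h : omega_hom eta_tree (corolla j.+2) => proj1_sig h ord0)): Hg.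
by have [eij] := corolla_hom_root_arity (m := i.+2) isT g0; rewrite eij ltnn in ij.
Qed.

Theorem proposition5p6 : ~ quasi_grobner Omega.
Proof.
move=> /quasi_grobner_under_noetherian /(_ eta_tree).
exact: Omega_under_eta_not_noetherian.
Qed.
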